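(* Let $F\in\{\triangle_0,\mathcal{T}\mathbb{R}_0,\mathcal{T}\mathbb{C}_0,\mathcal{T}\triangle_0\}$. Define $H:F\times[0,1]\to F$ by $H(0,t)=0$ and $H(x,t)=x|x|^{-t}$ for $x\ne0$. Then $H$ is a hyperfield homotopy. Moreover $H_0$ is the identity and $H_1(x)=\operatorname{ph}(x)$.
   Context: Hyperfields. A hyperfield $(F,\odot,\boxplus,1,0)$ has the following data and axioms. - $\odot$ is a commutative multiplication and $\boxplus$ is a hyperaddition assigning to each $x,y$ a nonempty subset $x\boxplus y\subseteq F$ (extended to subsets by unions). - $\boxplus$ is commutative and associative, and $x\boxplus 0=\{x\}$. - Each $x$ has a unique $-x$ with $0\in x\boxplus(-x)$, and $x\in y\boxplus z \iff z\in x\boxplus(-y)$. - $(F\setminus\{0\},\odot,1)$ is an abelian group, $0\odot x=0$, and $x\odot(y\boxplus z)=(x\odot y)\boxplus(x\odot z)$. A homomorphism $h$ satisfies $h(0)=0$, $h(1)=1$, $h(xy)=h(x)h(y)$ and $h(x\boxplus y)\subseteq h(x)\boxplus h(y)$. Topological hyperfields. A topological hyperfield is a hyperfield with a topology in which $F\setminus\{0\}$ is open, multiplication is continuous, and inversion on $F^\times$ is continuous. If $T$ is the topology, the 0-coarse topology has as open sets $F$ together with all $U\in T$ with $0\notin U$. A hyperfield homotopy between topological hyperfields $F,F'$ is a continuous $H:F\times[0,1]\to F'$ such that each $H_t=H(\cdot,t)$ is a hyperfield homomorphism. The hyperfields in the claim all use the usual multiplication of $\mathbb{C}$. - $\triangle=\mathbb{R}_{\ge0}$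 with $a\boxplus b=[|a-b|,a+b]$. - $\mathcal{T}\triangle=\mathbb{R}_{\ge0}$ with $a\boxplus b=\{\max(a,b)\}$ if $a\ne b$, and $a\boxplus a=[0,a]$. - $\mathcal{T}\mathbb{R}=\mathbb{R}$ with $a\boxplus b=\{a\}$ if $|a|>|b|$ or $a=b$, and $a\boxplus(-a)=[-|a|,|a|]$. - $\mathcal{T}\mathbb{C}=\mathbb{C}$ with the following hyperaddition: $a\boxplus b=\{a\}$ if $|a|>|b|$; $a\boxplus(-a)$ is the closed disk $\{x:|x|\le|a|\}$; if $|a|=|b|$ and $b\ne-a$, then $a\boxplus b$ is the shortest closed arc from $a$ to $b$ on the circle of radius $|a|$ centered at $0$. The subscript $0$ means the 0-coarse topology derived from the usual Euclidean topology. $\operatorname{ph}(x)=x/|x|$ for $x\ne0$, and $\operatorname{ph}(0)=0$. *)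

From Stdlib Require Import Reals Lra.
Open Scope R_scope.

Definition C : Type := (R * R)%type.
Definition C0 : C := (0, 0).
Definition C1 : C := (1, 0).
Definition Re (z : C) : R := fst z.
Definition Im (z : C) : R := snd z.
Definition Cmul (z w : C) : C :=
  (fst z * fst w - snd z * snd w, fst z * snd w + snd z * fst w).
Definition Copp (z : C) : C := (- fst z, - snd z).
Definition Cscale (r : R) (z : C) : C := (r * fst z, r * snd z).
Definition Cnorm (z : C) : R := sqrt (fst z * fst z + snd z * snd z).

Lemma Ceq_dec : forall z w : C, {z = w} + {z <> w}.
Proof.
  intros [a b] [c d].
  destruct (Req_EM_T a c) as [H1|H1]; [destruct (Req_EM_T b d) as [H2|H2]|].
  - left; subst; reflexivity.
  - right; intros H; inversion H; contradiction.
  - right; intros H; inversion H; contradiction.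
Defined.

(** rotation of z by angle th (multiplication by e^{i th}) *)
Definition Crot (th : R) (z : C) : C :=
  (fst z * cos th - snd z * sin th, fst z * sin th + snd z * cos th).

Definition ph (x : C) : C :=
  if Ceq_dec x C0 then C0 else Cscale (/ Cnorm x) x.

Definition Hmap (x : C) (t : R) : C :=
  if Ceq_dec x C0 then C0 else Cscale (Rpower (Cnorm x) (- t)) x.

(** * The four hyperfields (all with the usual multiplication of C) *)
Inductive HF : Type := Tri | TTri | TR | TC.

(** carriers, as subsets of C:  triangle, T-triangle = R_{>=0};  TR = R;  TC = C *)
Definition car (F : HF) (x : C) : Prop :=
  match F with
  | Tri | TTri => Im x = 0 /\ 0 <= Re x
  | TR => Im x = 0
  | TC => True
  end.

(** z lies on the shortest closed arc from a to b on the circle of radius |a|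
    (used only when |a| = |b| and b <> -a): b = e^{i phi} a with |phi| < pi,
    and z = e^{i theta} a with theta between 0 and phi. *)
Definition on_short_arc (a b z : C) : Prop :=
  exists phi, - PI < phi < PI /\ b = Crot phi a /\
    exists theta, Rmin 0 phi <= theta <= Rmax 0 phi /\ z = Crot theta a.

(** hadd F x y z  means  z \in x \boxplus y  (for x, y, z in the carrier of F) *)
Definition hadd (F : HF) (a b z : C) : Prop :=
  match F with
  | Tri => Rabs (Re a - Re b) <= Re z <= Re a + Re b
  | TTri => (Re a <> Re b /\ Re z = Rmax (Re a) (Re b))
            \/ (Re a = Re b /\ 0 <= Re z <= Re a)
  | TR => (Rabs (Re a) > Rabs (Re b) /\ z = a)
          \/ (Rabs (Re b) > Rabs (Re a) /\ z = b)
          \/ (a = b /\ z = a)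
          \/ (b = Copp a /\ - Rabs (Re a) <= Re z <= Rabs (Re a))
  | TC => (Cnorm a > Cnorm b /\ z = a)
          \/ (Cnorm b > Cnorm a /\ z = b)
          \/ (b = Copp a /\ Cnorm z <= Cnorm a)
          \/ (Cnorm a = Cnorm b /\ b <> Copp a /\ on_short_arc a b z)
  end.

Definition hf_hom (F F' : HF) (h : C -> C) : Prop :=
  (forall x, car F x -> car F' (h x)) /\
  h C0 = C0 /\ h C1 = C1 /\
  (forall x y, car F x -> car F y -> h (Cmul x y) = Cmul (h x) (h y)) /\
  (forall x y z, car F x -> car F y -> car F z -> hadd F x y z ->
      hadd F' (h x) (h y) (h z)).

Definition eopen (F : HF) (U : C -> Prop) : Prop :=
  (forall x, U x -> car F x) /\
  forall x, U x -> exists e, 0 < e /\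
     forall y, car F y -> Cnorm (fst y - fst x, snd y - snd x) < e -> U y.

Definition open0 (F : HF) (U : C -> Prop) : Prop :=
  (forall x, U x <-> car F x) \/ (eopen F U /\ ~ U C0).

Definition prod_open (F : HF) (W : C -> R -> Prop) : Prop :=
  (forall x t, W x t -> car F x /\ 0 <= t <= 1) /\
  forall x t, W x t -> exists V, open0 F V /\ V x /\ exists e, 0 < e /\
     forall y s, V y -> 0 <= s <= 1 -> Rabs (s - t) < e -> W y s.

Definition continuous0 (F F' : HF) (H : C -> R -> C) : Prop :=
  forall U, open0 F' U ->
    prod_open F (fun x t => (car F x /\ 0 <= t <= 1) /\ U (H x t)).

Definition hf_homotopy (F F' : HF) (H : C -> R -> C) : Prop :=
  (forall x t, car F x -> 0 <= t <= 1 -> car F' (H x t)) /\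
  continuous0 F F' H /\
  (forall t, 0 <= t <= 1 -> hf_hom F F' (fun x => H x t)).

From Stdlib Require Import Reals Lra.
From Coquelicot Require Import Coquelicot.
Open Scope R_scope.

(* H_t multiplies x by the positive real |x|^(-t).  It is therefore multiplicative,
   commutes with rotations and with x |-> -x, and acts on norms by the radial profile
   r |-> r^(1-t), which for 0 <= t <= 1 is nonnegative, nondecreasing and (being
   concave) subadditive.  Each hyperaddition is described by norm comparisons,
   triangle inequalities and arcs, which these properties preserve, except that a
   strict comparison |a| > |b| may become an equality; but then the image of the sum,
   which is the image of a or of b, is still in the hypersum of the images.
   Continuity for the 0-coarse topology only has to be checked at points x <> 0,
   where H is jointly continuous in the Euclidean sense. *)

Lemma Cnorm_nonneg x : 0 <= Cnorm x.
Proof. apply sqrt_pos. Qed.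

Lemma Cnorm_C0 : Cnorm C0 = 0.
Proof. unfold Cnorm, C0; simpl. rewrite Rmult_0_l, Rplus_0_l. apply sqrt_0. Qed.

Lemma Cnorm_pos x : x <> C0 -> 0 < Cnorm x.
Proof.
  destruct x as [a b]; unfold Cnorm; simpl; intro Hx.
  apply sqrt_lt_R0.
  destruct (Req_dec a 0) as [->|Ha]; [destruct (Req_dec b 0) as [->|Hb]|].
  - contradiction.
  - nra.
  - nra.
Qed.

Lemma Cnorm_real a : Cnorm (a, 0) = Rabs a.
Proof.
  unfold Cnorm; simpl. rewrite Rmult_0_l, Rplus_0_r. apply sqrt_Rsqr_abs.
Qed.

Lemma Cnorm_Cscale k x : 0 <= k -> Cnorm (Cscale k x) = k * Cnorm x.
Proof.
  intro Hk; destruct x as [a b]; unfold Cnorm, Cscale; simpl.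
  replace (k*a*(k*a)+k*b*(k*b)) with ((k*k)*(a*a+b*b)) by ring.
  rewrite sqrt_mult_alt by nra. rewrite sqrt_square; auto.
Qed.

Lemma Cnorm_Cmul x y : Cnorm (Cmul x y) = Cnorm x * Cnorm y.
Proof.
  destruct x as [a b], y as [c d]; unfold Cnorm, Cmul; simpl.
  rewrite <- sqrt_mult by nra. f_equal; ring.
Qed.

Lemma Cnorm_Copp x : Cnorm (Copp x) = Cnorm x.
Proof. destruct x; unfold Cnorm, Copp; simpl; f_equal; ring. Qed.

Lemma Cnorm_Crot th x : Cnorm (Crot th x) = Cnorm x.
Proof.
  destruct x as [a b]; unfold Cnorm, Crot; simpl. f_equal.
  pose proof (sin2_cos2 th) as E; unfold Rsqr in E.
  transitivity ((a*a+b*b)*(sin th * sin th + cos th * cos th)); [ring|].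
  rewrite E; ring.
Qed.

Definition radial (t r : R) : R := Rpower r (- t) * r.

Lemma radial_0 t : radial t 0 = 0.
Proof. unfold radial; ring. Qed.

Lemma radial_Rpower t r : 0 < r -> radial t r = Rpower r (1 - t).
Proof.
  intro Hr; unfold radial. replace (1 - t) with (- t + 1) by ring.
  rewrite Rpower_plus, Rpower_1; auto.
Qed.

Lemma radial_nonneg t r : 0 <= r -> 0 <= radial t r.
Proof. intro Hr; unfold radial. pose proof (exp_pos (- t * ln r)). unfold Rpower; nra. Qed.

Lemma radial_le t r1 r2 : t <= 1 -> 0 <= r1 <= r2 -> radial t r1 <= radial t r2.
Proof.
  intros Ht [[Hr1|<-] Hr12].
  - rewrite !radial_Rpower by lra. apply Rle_Rpower_l; lra.
  - rewrite radial_0. apply radial_nonneg; lra.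
Qed.

Lemma Rpower_ge_self y s : 0 < y <= 1 -> s <= 1 -> y <= Rpower y s.
Proof.
  intros Hy Hs. unfold Rpower. rewrite <- (exp_ln y) at 1 by lra.
  assert (Hln : ln y <= 0).
  { destruct (Req_dec y 1) as [->|Hy1]; [rewrite ln_1; lra|].
    rewrite <- ln_1; left; apply ln_increasing; lra. }
  destruct (Req_dec s 1) as [->|Hs1]; [rewrite Rmult_1_l; lra|].
  destruct (Req_dec (ln y) 0) as [E|E]; [rewrite E, Rmult_0_r; lra|].
  left; apply exp_increasing; nra.
Qed.

(* Concavity of r^(1-t): with c = a + b, each of a^(1-t), b^(1-t) is at
   least its share (a/c) c^(1-t), resp. (b/c) c^(1-t), of c^(1-t). *)
Lemma radial_subadd t a b : 0 <= t <= 1 -> 0 <= a -> 0 <= b ->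
  radial t (a + b) <= radial t a + radial t b.
Proof.
  intros Ht [Ha|<-] [Hb|<-];
    try (rewrite ?Rplus_0_l, ?Rplus_0_r, ?radial_0; lra).
  set (c := a + b).
  assert (Hc : 0 < c) by (unfold c; lra).
  assert (Hshare : forall u, 0 < u <= c -> u / c * Rpower c (1 - t) <= Rpower u (1 - t)).
  { intros u Hu.
    replace (Rpower u (1 - t)) with (Rpower (u / c) (1 - t) * Rpower c (1 - t)).
    - apply Rmult_le_compat_r; [left; apply exp_pos|].
      apply Rpower_ge_self; [|lra]. split.
      + apply Rdiv_lt_0_compat; lra.
      + apply Rmult_le_reg_r with c; [lra|]. field_simplify; lra.
    - rewrite Rpower_mult_distr by (try apply Rdiv_lt_0_compat; lra).
      f_equal; field; lra. }
  rewrite !radial_Rpower by lra.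
  pose proof (Hshare a ltac:(unfold c; lra)); pose proof (Hshare b ltac:(unfold c; lra)).
  assert (Hsum : a / c + b / c = 1) by (unfold c; field; lra).
  replace (Rpower c (1 - t)) with ((a / c + b / c) * Rpower c (1 - t))
    by (rewrite Hsum; ring).
  lra.
Qed.

Lemma Hmap_Cscale x t : Hmap x t = Cscale (Rpower (Cnorm x) (- t)) x.
Proof.
  unfold Hmap. destruct (Ceq_dec x C0) as [->|_]; auto.
  unfold Cscale, C0; simpl; f_equal; ring.
Qed.

Lemma Hmap_C0 t : Hmap C0 t = C0.
Proof. unfold Hmap; destruct (Ceq_dec C0 C0); congruence. Qed.

Lemma Hmap_C1 t : Hmap C1 t = C1.
Proof.
  rewrite Hmap_Cscale. unfold C1, Cnorm, Cscale, Rpower; simpl.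
  rewrite Rmult_1_l, Rmult_0_l, Rplus_0_r, sqrt_1, ln_1, Rmult_0_r, exp_0.
  f_equal; ring.
Qed.

Lemma Hmap_0 x : Hmap x 0 = x.
Proof.
  rewrite Hmap_Cscale. unfold Rpower. rewrite Ropp_0, Rmult_0_l, exp_0.
  destruct x; unfold Cscale; simpl; f_equal; ring.
Qed.

Lemma Hmap_1 x : Hmap x 1 = ph x.
Proof.
  unfold Hmap, ph. destruct (Ceq_dec x C0) as [_|Hx]; auto.
  rewrite Rpower_Ropp, Rpower_1 by (apply Cnorm_pos; auto). reflexivity.
Qed.

Lemma Cnorm_Hmap x t : Cnorm (Hmap x t) = radial t (Cnorm x).
Proof. rewrite Hmap_Cscale, Cnorm_Cscale; [reflexivity|left; apply exp_pos]. Qed.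

Lemma Cnorm_Hmap_le x y t : t <= 1 -> Cnorm x <= Cnorm y ->
  Cnorm (Hmap x t) <= Cnorm (Hmap y t).
Proof.
  intros Ht Hxy. rewrite !Cnorm_Hmap. apply radial_le; auto.
  split; [apply Cnorm_nonneg|auto].
Qed.

Lemma Hmap_Cmul x y t : Hmap (Cmul x y) t = Cmul (Hmap x t) (Hmap y t).
Proof.
  rewrite !Hmap_Cscale, Cnorm_Cmul.
  destruct (Ceq_dec x C0) as [->|Hx].
  { destruct y; unfold Cscale, Cmul, C0; simpl; f_equal; ring. }
  destruct (Ceq_dec y C0) as [->|Hy].
  { destruct x; unfold Cscale, Cmul, C0; simpl; f_equal; ring. }
  rewrite <- Rpower_mult_distr by (apply Cnorm_pos; auto).
  destruct x, y; unfold Cscale, Cmul; simpl; f_equal; ring.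
Qed.

Lemma Hmap_Copp x t : Hmap (Copp x) t = Copp (Hmap x t).
Proof.
  rewrite !Hmap_Cscale, Cnorm_Copp.
  destruct x; unfold Cscale, Copp; simpl; f_equal; ring.
Qed.

Lemma car_Cscale F k x : 0 <= k -> car F x -> car F (Cscale k x).
Proof.
  intro Hk; destruct F, x as [a b]; unfold car, Cscale, Re, Im; simpl;
    intros; try tauto.
  - split; [nra|apply Rmult_le_pos; tauto].
  - split; [nra|apply Rmult_le_pos; tauto].
  - nra.
Qed.

Lemma car_Hmap F x t : car F x -> car F (Hmap x t).
Proof. rewrite Hmap_Cscale; apply car_Cscale; left; apply exp_pos. Qed.

Lemma Re_Hmap_nonneg x t : Im x = 0 -> 0 <= Re x -> Re (Hmap x t) = radial t (Re x).
Proof.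
  destruct x as [a b]; unfold Re, Im; simpl; intros -> Ha.
  rewrite Hmap_Cscale, Cnorm_real, Rabs_pos_eq by auto. reflexivity.
Qed.

Lemma Rabs_Re_real x : Im x = 0 -> Rabs (Re x) = Cnorm x.
Proof. destruct x as [a b]; unfold Re, Im; simpl; intros ->. symmetry; apply Cnorm_real. Qed.

Section MonotoneMaps.

Variable f : R -> R.
Hypothesis f_le : forall x y, 0 <= x <= y -> f x <= f y.

Lemma triangle_hadd_image (f_subadd : forall x y, 0 <= x -> 0 <= y -> f (x + y) <= f x + f y)
  a b z : 0 <= a -> 0 <= b -> 0 <= z -> Rabs (a - b) <= z <= a + b ->
  Rabs (f a - f b) <= f z <= f a + f b.
Proof.
  intros Ha Hb Hz [Hlo Hhi].
  pose proof (Rle_abs (a - b)); pose proof (Rle_abs (- (a - b))); rewrite Rabs_Ropp in *.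
  assert (f a <= f z + f b) by
    (eapply Rle_trans; [apply (f_le a (z + b)); lra|apply f_subadd; lra]).
  assert (f b <= f z + f a) by
    (eapply Rle_trans; [apply (f_le b (z + a)); lra|apply f_subadd; lra]).
  split.
  - apply Rabs_le; lra.
  - eapply Rle_trans; [apply (f_le z (a + b)); lra|apply f_subadd; lra].
Qed.

Lemma Rmax_image a b : 0 <= a -> 0 <= b -> f (Rmax a b) = Rmax (f a) (f b).
Proof.
  intros Ha Hb. unfold Rmax.
  destruct (Rle_dec a b) as [Hab|Hab]; destruct (Rle_dec (f a) (f b)) as [Hf|Hf]; auto.
  - exfalso; apply Hf, f_le; lra.
  - apply Rle_antisym; [lra|apply f_le; lra].
Qed.

(* Ties f a = f b created by f fall into the second alternative, because then
   f z is one of the equal values f a, f b. *)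
Lemma tropical_triangle_hadd_image (f_nonneg : forall x, 0 <= x -> 0 <= f x)
  a b z : 0 <= a -> 0 <= b -> 0 <= z ->
  (a <> b /\ z = Rmax a b) \/ (a = b /\ 0 <= z <= a) ->
  (f a <> f b /\ f z = Rmax (f a) (f b)) \/ (f a = f b /\ 0 <= f z <= f a).
Proof.
  intros Ha Hb Hz [[_ ->]|[<- Hza]].
  - rewrite Rmax_image by auto.
    destruct (Req_dec (f a) (f b)) as [E|E]; [right|left; auto].
    rewrite <- E, Rmax_left by lra. split; [auto|split; [apply f_nonneg|]; lra].
  - right. split; [auto|split; [apply f_nonneg|apply f_le]; lra].
Qed.

End MonotoneMaps.

Lemma Crot_0 x : Crot 0 x = x.
Proof. destruct x; unfold Crot; simpl; rewrite cos_0, sin_0; f_equal; ring. Qed.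

Lemma Crot_Cscale th k x : Crot th (Cscale k x) = Cscale k (Crot th x).
Proof. destruct x; unfold Crot, Cscale; simpl; f_equal; ring. Qed.

Lemma Cscale_Copp k x : Cscale k (Copp x) = Copp (Cscale k x).
Proof. destruct x; unfold Cscale, Copp; simpl; f_equal; ring. Qed.

Lemma Cscale_inj k x y : k <> 0 -> Cscale k x = Cscale k y -> x = y.
Proof.
  destruct x as [a b], y as [c d]; unfold Cscale; simpl; intros Hk E.
  injection E as E1 E2. f_equal; eapply Rmult_eq_reg_l; eauto.
Qed.

(* The rotation angle phi is read off from the cosine c and sine d of the
   angle from u to v; c > -1 exactly because v <> -u. *)
Lemma short_arc_rotation u v : Cnorm u = Cnorm v -> v <> Copp u ->
  exists phi, - PI < phi < PI /\ v = Crot phi u.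
Proof.
  destruct u as [u1 u2], v as [v1 v2]. unfold Cnorm; simpl. intros Huv Hne.
  apply sqrt_inj in Huv; [|nra|nra].
  set (n := u1*u1+u2*u2) in *.
  assert (Hn : 0 < n).
  { destruct (Rle_lt_dec n 0) as [H|H]; auto. exfalso; apply Hne.
    assert (u1 = 0 /\ u2 = 0 /\ v1 = 0 /\ v2 = 0) as (-> & -> & -> & ->)
      by (unfold n in *; repeat split; nra).
    unfold Copp; simpl; f_equal; ring. }
  set (c := (v1*u1+v2*u2) / n). set (d := (v2*u1 - v1*u2) / n).
  assert (Hcd : c*c+d*d = 1).
  { assert (Hlag : (v1*u1+v2*u2)*(v1*u1+v2*u2) + (v2*u1-v1*u2)*(v2*u1-v1*u2) = n*n).
    { transitivity ((u1*u1+u2*u2)*(v1*v1+v2*v2)); [ring|]. rewrite <- Huv. reflexivity. }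
    transitivity ((n * n) / (n * n)); [|field; lra].
    rewrite <- Hlag at 1. unfold c, d. field; lra. }
  assert (E1 : v1 = u1*c - u2*d) by (unfold c, d, n in *; field; lra).
  assert (E2 : v2 = u1*d + u2*c) by (unfold c, d, n in *; field; lra).
  assert (Hc : -1 < c).
  { destruct (Rlt_or_le (-1) c) as [h|h]; auto. exfalso.
    assert (Hc1 : c = -1) by nra. assert (Hd0 : d = 0) by nra.
    apply Hne. unfold Copp; simpl. rewrite E1, E2, Hc1, Hd0. f_equal; ring. }
  assert (Hacos : acos c < PI).
  { destruct (Rlt_or_le c 1) as [h|h].
    - apply acos_bound_lt; lra.
    - replace c with 1 by nra. rewrite acos_1. apply PI_RGT_0. }
  pose proof (acos_bound c) as Hb.
  assert (Hsin : sin (acos c) = Rabs d).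
  { rewrite sin_acos by nra. rewrite <- sqrt_Rsqr_abs. f_equal. unfold Rsqr; lra. }
  pose proof (cos_acos c ltac:(nra)) as Hcos.
  destruct (Rle_or_lt 0 d) as [Hd|Hd].
  - exists (acos c). split; [lra|]. unfold Crot; simpl.
    rewrite Hcos, Hsin, Rabs_pos_eq, E1, E2 by lra. reflexivity.
  - exists (- acos c). split; [lra|]. unfold Crot; simpl.
    rewrite cos_neg, sin_neg, Hcos, Hsin, Rabs_left, E1, E2 by lra. f_equal; ring.
Qed.

Lemma on_short_arc_Cnorm a b z : on_short_arc a b z -> Cnorm z = Cnorm a.
Proof. intros (_ & _ & _ & th & _ & ->). apply Cnorm_Crot. Qed.

Lemma on_short_arc_Cscale k a b z : on_short_arc a b z ->
  on_short_arc (Cscale k a) (Cscale k b) (Cscale k z).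
Proof.
  intros (phi & Hphi & -> & th & Hth & ->).
  exists phi. split; [auto|]. split; [symmetry; apply Crot_Cscale|].
  exists th. split; [auto|symmetry; apply Crot_Cscale].
Qed.

Lemma hadd_TC_equal_norms a b z : Cnorm a = Cnorm b -> z = a \/ z = b -> hadd TC a b z.
Proof.
  intros Hab Hz. simpl. destruct (Ceq_dec b (Copp a)) as [Hopp|Hopp].
  - right; right; left. split; [auto|destruct Hz as [-> | ->]; lra].
  - right; right; right. split; [auto|split; [auto|]].
    destruct (short_arc_rotation a b Hab Hopp) as [phi [Hphi Hb]].
    exists phi. split; [auto|split; [auto|]].
    destruct Hz as [-> | ->].
    + exists 0. split; [split; [apply Rmin_l|apply Rmax_l]|symmetry; apply Crot_0].
    + exists phi. split; [split; [apply Rmin_r|apply Rmax_r]|auto].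
Qed.

Lemma hadd_TC_Hmap t a b z : t <= 1 -> hadd TC a b z ->
  hadd TC (Hmap a t) (Hmap b t) (Hmap z t).
Proof.
  intros Ht Habz.
  destruct Habz as [[Hab ->]|[[Hba ->]|[[-> Hza]|(Hab & Hopp & Harc)]]].
  - destruct (Rle_lt_or_eq_dec _ _ (Cnorm_Hmap_le b a t Ht (Rlt_le _ _ Hab))) as [Hlt|Heq].
    + left; auto.
    + apply hadd_TC_equal_norms; auto.
  - destruct (Rle_lt_or_eq_dec _ _ (Cnorm_Hmap_le a b t Ht (Rlt_le _ _ Hba))) as [Hlt|Heq].
    + right; left; auto.
    + apply hadd_TC_equal_norms; auto.
  - right; right; left. split; [apply Hmap_Copp|apply Cnorm_Hmap_le; auto].
  - set (k := Rpower (Cnorm a) (- t)).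
    assert (Hk : 0 < k) by apply exp_pos.
    assert (Hz : Cnorm z = Cnorm a) by (eapply on_short_arc_Cnorm; eauto).
    rewrite !Hmap_Cscale, <- Hab, Hz. fold k.
    right; right; right. split; [|split].
    + rewrite !Cnorm_Cscale by lra. congruence.
    + rewrite <- Cscale_Copp. intro E. apply Hopp. eapply Cscale_inj; [|eauto]; lra.
    + apply on_short_arc_Cscale; auto.
Qed.

Lemma hadd_TR_equal_norms a b z : Im a = 0 -> Im b = 0 -> Cnorm a = Cnorm b ->
  z = a \/ z = b -> hadd TR a b z.
Proof.
  destruct a as [a a'], b as [b b']; unfold Im; simpl; intros -> -> Hab Hz.
  rewrite !Cnorm_real in Hab. simpl.
  destruct (Rsqr_eq _ _ (Rsqr_eq_asb_1 _ _ Hab)) as [-> | ->].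
  - right; right; left. split; [auto|destruct Hz as [-> | ->]; auto].
  - right; right; right. split; [unfold Copp; simpl; f_equal; ring|].
    pose proof (Rle_abs b); pose proof (Rle_abs (- b)); rewrite Rabs_Ropp in *.
    destruct Hz as [-> | ->]; simpl; lra.
Qed.

Lemma hadd_TR_Hmap t a b z : t <= 1 -> Im a = 0 -> Im b = 0 -> Im z = 0 ->
  hadd TR a b z -> hadd TR (Hmap a t) (Hmap b t) (Hmap z t).
Proof.
  intros Ht Ha Hb Hz Habz.
  assert (Hreal : forall x, Im x = 0 -> Im (Hmap x t) = 0)
    by (intros x Hx; exact (car_Hmap TR x t Hx)).
  simpl in Habz |- *.
  destruct Habz as [[Hab ->]|[[Hba ->]|[[-> ->]|[-> Hza]]]].
  - rewrite !Rabs_Re_real in Hab by auto.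
    destruct (Rle_lt_or_eq_dec _ _ (Cnorm_Hmap_le b a t Ht (Rlt_le _ _ Hab))) as [Hlt|Heq].
    + left; rewrite !Rabs_Re_real by auto; auto.
    + apply hadd_TR_equal_norms; auto.
  - rewrite !Rabs_Re_real in Hba by auto.
    destruct (Rle_lt_or_eq_dec _ _ (Cnorm_Hmap_le a b t Ht (Rlt_le _ _ Hba))) as [Hlt|Heq].
    + right; left; rewrite !Rabs_Re_real by auto; auto.
    + apply hadd_TR_equal_norms; auto.
  - right; right; left; auto.
  - right; right; right. split; [apply Hmap_Copp|].
    assert (Habs : Rabs (Re (Hmap z t)) <= Rabs (Re (Hmap a t))).
    { apply Rabs_le in Hza. rewrite !Rabs_Re_real in Hza |- * by auto.
      apply Cnorm_Hmap_le; auto. }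
    pose proof (Rle_abs (Re (Hmap z t))); pose proof (Rle_abs (- Re (Hmap z t))).
    rewrite Rabs_Ropp in *. lra.
Qed.

Lemma Hmap_hf_hom F t : 0 <= t <= 1 -> hf_hom F F (fun x => Hmap x t).
Proof.
  intro Ht. split; [intros; apply car_Hmap; auto|].
  split; [apply Hmap_C0|]. split; [apply Hmap_C1|].
  split; [intros; apply Hmap_Cmul|].
  intros x y z Hx Hy Hz Hxyz. destruct F; simpl in Hx, Hy, Hz.
  - simpl in Hxyz |- *. rewrite !Re_Hmap_nonneg by tauto.
    apply triangle_hadd_image; try tauto.
    + intros; apply radial_le; lra.
    + intros; apply radial_subadd; lra.
  - simpl in Hxyz |- *. rewrite !Re_Hmap_nonneg by tauto.
    apply tropical_triangle_hadd_image; try tauto.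
    + intros; apply radial_le; lra.
    + intros; apply radial_nonneg; lra.
  - apply hadd_TR_Hmap; auto; lra.
  - apply hadd_TC_Hmap; auto; lra.
Qed.

Definition Cdist (x y : C) : R := Cnorm (fst y - fst x, snd y - snd x).

Lemma Rabs_fst_le_Cnorm x : Rabs (fst x) <= Cnorm x.
Proof.
  destruct x as [a b]; unfold Cnorm; simpl.
  rewrite <- sqrt_Rsqr_abs. apply sqrt_le_1_alt. unfold Rsqr; nra.
Qed.

Lemma Rabs_snd_le_Cnorm x : Rabs (snd x) <= Cnorm x.
Proof.
  destruct x as [a b]; unfold Cnorm; simpl.
  rewrite <- sqrt_Rsqr_abs. apply sqrt_le_1_alt. unfold Rsqr; nra.
Qed.

Lemma Cnorm_le_Rabs_add x : Cnorm x <= Rabs (fst x) + Rabs (snd x).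
Proof.
  destruct x as [a b]; unfold Cnorm; simpl.
  pose proof (Rabs_pos a); pose proof (Rabs_pos b).
  rewrite <- (sqrt_square (Rabs a + Rabs b)) by lra. apply sqrt_le_1_alt.
  pose proof (Rsqr_abs a); pose proof (Rsqr_abs b); unfold Rsqr in *. nra.
Qed.

(* The cross term is bounded by Cauchy-Schwarz in the form of Lagrange's identity. *)
Lemma Cnorm_add_le u1 u2 v1 v2 :
  Cnorm (u1 + v1, u2 + v2) <= Cnorm (u1, u2) + Cnorm (v1, v2).
Proof.
  unfold Cnorm; simpl.
  pose proof (sqrt_pos (u1*u1+u2*u2)); pose proof (sqrt_pos (v1*v1+v2*v2)).
  set (nu := sqrt (u1*u1+u2*u2)) in *; set (nv := sqrt (v1*v1+v2*v2)) in *.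
  assert (Hu : nu * nu = u1*u1+u2*u2) by (apply sqrt_sqrt; nra).
  assert (Hv : nv * nv = v1*v1+v2*v2) by (apply sqrt_sqrt; nra).
  assert (Hdot : u1*v1 + u2*v2 <= nu * nv).
  { unfold nu, nv; rewrite <- sqrt_mult by nra.
    eapply Rle_trans; [apply Rle_abs|].
    rewrite <- sqrt_Rsqr_abs. apply sqrt_le_1_alt. unfold Rsqr.
    pose proof (Rle_0_sqr (u1*v2 - u2*v1)); unfold Rsqr in *; nra. }
  rewrite <- (sqrt_square (nu + nv)) by lra.
  apply sqrt_le_1_alt. nra.
Qed.

Lemma Cdist_triangle x y z : Cdist x z <= Cdist x y + Cdist y z.
Proof.
  unfold Cdist.
  replace (fst z - fst x) with ((fst y - fst x) + (fst z - fst y)) by ring.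
  replace (snd z - snd x) with ((snd y - snd x) + (snd z - snd y)) by ring.
  apply Cnorm_add_le.
Qed.

Lemma Cdist_refl x : Cdist x x = 0.
Proof. unfold Cdist. rewrite !Rminus_diag. apply Cnorm_C0. Qed.

Lemma Cdist_C0_r x : Cdist x C0 = Cnorm x.
Proof.
  destruct x; unfold Cdist, Cnorm, C0; simpl. f_equal; ring.
Qed.

Lemma Cnorm_continuous (x : R * R) : continuous (fun y : R * R => Cnorm y) x.
Proof.
  destruct x as [x1 x2]. unfold Cnorm.
  apply (continuous_comp (fun y : R * R => fst y * fst y + snd y * snd y) sqrt);
    [|apply continuous_sqrt].
  apply (continuous_plus (V := R_NormedModule));
    apply (continuous_mult (K := R_AbsRing));
    first [apply continuous_fst|apply continuous_snd].
Qed.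

Lemma Hmap_factor_continuous (x : R * R) t : x <> C0 ->
  continuous (fun p : (R * R) * R => Rpower (Cnorm (fst p)) (- snd p)) (x, t).
Proof.
  intro Hx. unfold Rpower.
  apply (continuous_comp (fun p : (R * R) * R => - snd p * ln (Cnorm (fst p))) exp);
    [|apply continuous_exp].
  apply (continuous_mult (K := R_AbsRing)).
  - apply (continuous_opp (V := R_NormedModule)), continuous_snd.
  - apply (continuous_comp (fun p : (R * R) * R => Cnorm (fst p)) ln);
      [|apply continuous_ln, Cnorm_pos; auto].
    apply (continuous_comp fst Cnorm); [apply continuous_fst|apply Cnorm_continuous].
Qed.

Lemma continuous_eps_delta (g : (R * R) * R -> R) x t : continuous g (x, t) ->
  forall e, 0 < e -> exists d, 0 < d /\ forall y s,
    Cdist x y < d -> Rabs (s - t) < d -> Rabs (g (y, s) - g (x, t)) < e.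
Proof.
  intros Hg e He.
  destruct (proj1 (filterlim_locally g _) Hg (mkposreal e He)) as [d Hd].
  exists d. split; [apply cond_pos|].
  intros y s Hy Hs. apply (Hd (y, s)).
  pose proof (Rabs_fst_le_Cnorm (fst y - fst x, snd y - snd x)).
  pose proof (Rabs_snd_le_Cnorm (fst y - fst x, snd y - snd x)).
  unfold Cdist in Hy; simpl in *.
  assert (H1 : Rabs (fst y - fst x) < d) by lra.
  assert (H2 : Rabs (snd y - snd x) < d) by lra.
  split; [split|]; assumption.
Qed.

Lemma Hmap_continuous_at x t e : x <> C0 -> 0 < e -> exists d, 0 < d /\ forall y s,
  Cdist x y < d -> Rabs (s - t) < d -> Cdist (Hmap x t) (Hmap y s) < e.
Proof.
  intros Hx He.
  pose proof (Hmap_factor_continuous x t Hx) as Hk.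
  destruct x as [x1 x2].
  assert (H1 : continuous (fun p : (R * R) * R => Rpower (Cnorm (fst p)) (- snd p) * fst (fst p)) ((x1, x2), t)).
  { apply (continuous_mult (K := R_AbsRing)); [exact Hk|].
    apply (continuous_comp fst fst); apply continuous_fst. }
  assert (H2 : continuous (fun p : (R * R) * R => Rpower (Cnorm (fst p)) (- snd p) * snd (fst p)) ((x1, x2), t)).
  { apply (continuous_mult (K := R_AbsRing)); [exact Hk|].
    apply (continuous_comp fst snd); [apply continuous_fst|apply continuous_snd]. }
  destruct (continuous_eps_delta _ _ _ H1 (e / 2)) as [d1 [Hd1 D1]]; [lra|].
  destruct (continuous_eps_delta _ _ _ H2 (e / 2)) as [d2 [Hd2 D2]]; [lra|].
  exists (Rmin d1 d2). split; [apply Rmin_pos; auto|].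
  intros y s Hy Hs.
  pose proof (Rmin_l d1 d2); pose proof (Rmin_r d1 d2).
  specialize (D1 y s ltac:(lra) ltac:(lra)); specialize (D2 y s ltac:(lra) ltac:(lra)).
  unfold Cdist. eapply Rle_lt_trans; [apply Cnorm_le_Rabs_add|].
  rewrite !Hmap_Cscale; simpl in *; lra.
Qed.

Lemma eopen_ball F x r : eopen F (fun y => car F y /\ Cdist x y < r).
Proof.
  split; [intros y [Hy _]; auto|].
  intros y [Hy Hxy]. exists (r - Cdist x y). split; [lra|].
  intros z Hz Hyz. change (Cdist y z < r - Cdist x y) in Hyz.
  pose proof (Cdist_triangle x y z). split; [auto|lra].
Qed.

Lemma open0_ball F x r : r <= Cnorm x -> open0 F (fun y => car F y /\ Cdist x y < r).
Proof.
  intro Hr. right. split; [apply eopen_ball|].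
  intros [_ H0]. rewrite Cdist_C0_r in H0. lra.
Qed.

Lemma Hmap_continuous0 F : continuous0 F F Hmap.
Proof.
  intros U HU. split; [intros x t [Hxt _]; auto|].
  intros x t [[Hx Ht] HUx].
  destruct HU as [HU | [[_ HUopen] HU0]].
  - exists (car F). split; [left; tauto|]. split; [auto|].
    exists 1. split; [lra|]. intros y s Hy Hs _. split; [auto|]. apply HU, car_Hmap; auto.
  - assert (Hx0 : x <> C0) by (intros ->; rewrite Hmap_C0 in HUx; auto).
    destruct (HUopen _ HUx) as [e [He HUe]].
    destruct (Hmap_continuous_at x t e Hx0 He) as [d [Hd Hnear]].
    set (r := Rmin d (Cnorm x)).
    assert (Hr : 0 < r) by (apply Rmin_pos; [auto|apply Cnorm_pos; auto]).
    exists (fun y => car F y /\ Cdist x y < r). split; [apply open0_ball, Rmin_r|].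
    split; [split; [auto|rewrite Cdist_refl; auto]|].
    exists r. split; [auto|]. intros y s [Hy Hxy] Hs Hst. split; [split; auto|].
    assert (Hrd : r <= d) by apply Rmin_l.
    apply HUe; [apply car_Hmap; auto|]. apply Hnear; lra.
Qed.

Theorem proposition2p1 : forall F : HF,
  hf_homotopy F F Hmap /\
  (forall x, car F x -> Hmap x 0 = x) /\
  (forall x, car F x -> Hmap x 1 = ph x).
Proof.
  intro F. split; [|split; intros x _; [apply Hmap_0|apply Hmap_1]].
  split; [intros; apply car_Hmap; auto|].
  split; [apply Hmap_continuous0|].
  intros t Ht. apply Hmap_hf_hom; auto.
Qed.
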